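(* Let $G=(V,E)$ be a weighted undirected graph with $n$ labeled vertices and let $k\ge1$. The running time of Algorithm 2 (described in the context), with priority queues implemented as Fibonacci heaps, is $O(k|E|+k|V|\log|V|)$.
   Context: Fibonacci heap: insert and decrease-key cost $O(1)$ amortized, pop-minimum costs $O(\log$ size$)$. Algorithm 2: input an undirected graph $G=(V,E,w)$ with non-negative weights, labeled set $\mathcal L\subseteq V$, and $k$. It keeps a global min-priority queue $Q$ of vertices and, for each $v\in V$, a local min-priority queue $Q_v$ of seeds, a list kNN$[v]$ (initially empty) and a set $S_v$ (initially empty). Initially for each $v\in\mathcal L$: insert $v$ into $Q$ with priority $0$ and $v$ into $Q_v$ with priority $0$. While $Q$ is nonempty: pop the minimum $(v_0,\mathrm{dist})$ from $Q$; pop the minimum $(\mathrm{seed},\mathrm{dist})$ from $Q_{v_0}$; add $\mathrm{seed}$ to $S_{v_0}$; append $(\mathrm{seed},\mathrm{dist})$ to kNN$[v_0]$; if kNN$[v_0]$ has fewer than $k$ entries and $Q_{v_0}$ is nonempty, insert $v_0$ into $Q$ with priority equal to the current minimum priority of $Q_{v_0}$; then for every neighbour $v$ of $v_0$ with fewer than $k$ entries in kNN$[v]$ and $\mathrm{seed}\notin S_v$, perform decrease-or-insert of $\mathrm{seed}$ in $Q_v$ and of $v$ in $Q$, both with priority $\mathrm{dist}+w(v_0,v)$ (lower the priority if present, otherwise insert). *)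

(* Model of Algorithm 2 (multi-source k-nearest-labeled-vertices
   search) as a nondeterministic state machine, with an explicit cost model for
   Fibonacci-heap operations (amortized costs). *)
From HB Require Import structures.
From mathcomp Require Import all_boot all_order all_algebra.
Set Implicit Arguments. Unset Strict Implicit. Unset Printing Implicit Defensive.
Import Order.TTheory GRing.Theory Num.Theory.
Local Open Scope ring_scope.

Section Algo.
Variables (R : realDomainType) (V : finType).
(* Undirected simple graph: an edge is a 2-element subset of V. *)
Variable E : {set {set V}}.
(* Weight of the edge {u,v} is w [set u; v]. *)
Variable w : {set V} -> R.
Variable L : {set V}.
Variable k : nat.

Definition adj (u v : V) : bool := [set u; v] \in E.

(* An (abstract) min-priority queue with keys in V: key |-> Some priority,
   or None if the key is absent. *)
Definition pqueue := V -> option R.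

Definition pq_size (q : pqueue) : nat := #|[pred x | isSome (q x)]|.

Definition pq_is_min (q : pqueue) (x : V) (d : R) : Prop :=
  q x = Some d /\ forall y d', q y = Some d' -> d <= d'.

Definition pq_remove (q : pqueue) (x : V) : pqueue :=
  fun y => if y == x then None else q y.

Definition pq_insert (q : pqueue) (x : V) (d : R) : pqueue :=
  fun y => if y == x then Some d else q y.

Definition pq_decr_or_insert (q : pqueue) (x : V) (d : R) : pqueue :=
  fun y => if y == x then
             match q x with Some d0 => Some (Num.min d0 d) | None => Some d end
           else q y.

Record state := State {
  sQ   : pqueue;                 (* global queue of vertices *)
  sQv  : V -> pqueue;            (* local queue of seeds, per vertex *)
  sKNN : V -> seq (V * R);
  sS   : V -> {set V}
}.

Definition init_state : state :=
  State (fun v => if v \in L then Some 0 else None)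
        (fun v s => if (v \in L) && (s == v) then Some 0 else None)
        (fun _ => [::])
        (fun _ => set0).

(* Cost of initialisation: creating the per-vertex structures, plus 2 inserts
   per labeled vertex. *)
Definition init_cost : nat := #|V| + 2 * #|L|.

(* Amortized cost of a Fibonacci-heap pop-minimum on a heap of size s. *)
Definition pop_cost (s : nat) : nat := (trunc_log 2 s).+1.

(* One iteration of the while loop, with its cost c:
   two pops, the append, a find-min and (possibly) an insert of v0 into Q,
   and, for each neighbour v of v0, the test plus (possibly) two
   decrease-or-insert operations. All O(1) operations are charged 1. *)
Definition step (s : state) (c : nat) (s' : state) : Prop :=
  exists (v0 : V) (d0 : R) (seed : V) (dist : R),
    pq_is_min (sQ s) v0 d0 /\
    pq_is_min (sQv s v0) seed dist /\
    let Q1 := pq_remove (sQ s) v0 in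
    let Qv0 := pq_remove (sQv s v0) seed in
    let S1 := fun v => if v == v0 then seed |: sS s v0 else sS s v in
    let kNN1 := fun v => if v == v0 then rcons (sKNN s v0) (seed, dist)
                         else sKNN s v in
    let cond := fun v => [&& adj v0 v, (size (kNN1 v) < k)%N & seed \notin S1 v] in
    exists Q2 : pqueue,
      (if (size (kNN1 v0) < k)%N && (0 < pq_size Qv0)%N
       then exists seed' m, pq_is_min Qv0 seed' m /\ Q2 = pq_insert Q1 v0 m
       else Q2 = Q1) /\
      s' = State
             (fun v => if cond v then pq_decr_or_insert Q2 v (dist + w [set v0; v]) v
                       else Q2 v)
             (fun v => if cond v
                       then pq_decr_or_insert (if v == v0 then Qv0 else sQv s v)
                              seed (dist + w [set v0; v])
                       else if v == v0 then Qv0 else sQv s v)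
             kNN1 S1 /\
      c = (pop_cost (pq_size (sQ s)) + pop_cost (pq_size (sQv s v0)) + 3
           + 3 * #|[set v | adj v0 v]|)%N.

Inductive reach : state -> nat -> Prop :=
| reach_init : reach init_state init_cost
| reach_step s c c' s' : reach s c -> step s c' s' -> reach s' (c + c').

End Algo.

From HB Require Import structures.
From mathcomp Require Import all_boot all_order all_algebra zify.
Import Order.TTheory GRing.Theory Num.Theory.

Set Implicit Arguments. Unset Strict Implicit. Unset Printing Implicit Defensive.

(* Every iteration pops some v0 from Q and appends one entry to kNN[v0].  A
   vertex is in Q only while its list has fewer than k entries, so each list
   ends with at most k entries.  All heaps hold at most |V| keys, so the
   iteration that appends to kNN[v0] costs at most 2 log|V| + O(1) + 3 deg v0.
   Charging that cost to the appended entry bounds the total by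
   init + k * sum_v (2 log|V| + O(1) + 3 deg v), and sum_v deg v <= 2|E|. *)

Section Handshake.
Variables (V : finType) (E : {set {set V}}).

Definition degree (v : V) : nat := #|[set u | adj E v u]|.

Lemma degree_le_card_incident v : (degree v <= #|[set e in E | v \in e]|)%N.
Proof.
have set2_inj : injective (fun u : V => [set v; u]).
  move=> u u' /setP eq_vu.
  have := eq_vu u; rewrite !inE eqxx orbT => /esym/orP[/eqP vu|/eqP //].
  by move: (eq_vu u'); rewrite !inE eqxx orbT vu orbb => /eqP.
rewrite /degree -(card_imset _ set2_inj); apply: subset_leq_card.
by apply/subsetP => _ /imsetP[u + ->]; rewrite !inE /adj eqxx => ->.
Qed.

Lemma sum_card_incident :
  (\sum_v #|[set e in E | v \in e]| = \sum_(e in E) #|e|)%N.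
Proof.
transitivity (\sum_v \sum_(e in E) (v \in e : nat))%N.
  apply: eq_bigr => v _; rewrite -sum1dep_card big_mkcond /= [RHS]big_mkcond /=.
  by apply: eq_bigr => e _; case: (e \in E); case: (v \in e).
rewrite exchange_big /=; apply: eq_bigr => e _.
by rewrite -sum1_card [RHS]big_mkcond; apply: eq_bigr => v _; case: (v \in e).
Qed.

Lemma sum_degree_le_two_edges :
  (forall e, e \in E -> #|e| = 2) -> (\sum_v degree v <= 2 * #|E|)%N.
Proof.
move=> card_edge.
apply: (@leq_trans (\sum_v #|[set e in E | v \in e]|)).
  by apply: leq_sum => v _; apply: degree_le_card_incident.
by rewrite sum_card_incident (eq_bigr _ card_edge) sum_nat_const mulnC.
Qed.

End Handshake.

Lemma pop_cost_pq_le (R : realDomainType) (V : finType) (q : pqueue R V) :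
  (pop_cost (pq_size q) <= pop_cost #|V|)%N.
Proof. by rewrite ltnS leq_trunc_log ?max_card. Qed.

Section Execution.
Variables (R : realDomainType) (V : finType) (E : {set {set V}})
  (w : {set V} -> R) (L : {set V}) (k : nat).

Definition step_charge (v : V) : nat := 2 * pop_cost #|V| + 3 + 3 * degree E v.

Lemma step_spec s c s' : step E w k s c s' ->
  exists v0 : V, [/\ isSome (sQ s v0),
    forall v, size (sKNN s' v) = (size (sKNN s v) + (v == v0))%N,
    forall v, isSome (sQ s' v) ->
      ((v != v0) && isSome (sQ s v)) || (size (sKNN s' v) < k)%N
    & (c <= step_charge v0)%N].
Proof.
move=> [v0 [d0 [seed [dist [[Qv0 _] [_ [Q2 [Q2_def [-> ->]]]]]]]]] /=.
exists v0; split.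
- by rewrite Qv0.
- by move=> v; case: eqP => [->|_]; rewrite ?size_rcons ?addn1 ?addn0.
- move=> v; case: ifP => [/and3P[_ lt_k _]|_]; first by rewrite lt_k orbT.
  move: Q2_def; case: ifP => [/andP[lt_k _] [seed' [m [_ ->]]]|_ ->];
    rewrite /pq_insert /pq_remove; case: eqP => [->|_] //=.
  + by rewrite eqxx in lt_k.
  + by move=> ->.
  + by move=> ->.
- rewrite /step_charge /degree.
  have := pop_cost_pq_le (sQ s); have := pop_cost_pq_le (sQv s v0); lia.
Qed.

Definition potential (s : state R V) : nat :=
  \sum_v size (sKNN s v) * step_charge v.

Lemma potential_step s s' v0 :
  (forall v, size (sKNN s' v) = size (sKNN s v) + (v == v0))%N ->
  potential s' = (potential s + step_charge v0)%N.
Proof.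
move=> size_s'; rewrite /potential.
under eq_bigr => v _ do rewrite size_s' mulnDl.
rewrite big_split /=; congr (_ + _).
by rewrite (bigD1 v0) //= eqxx mul1n big1 ?addn0 // => v /negbTE ->.
Qed.

Definition kNN_bounded (s : state R V) : Prop :=
  forall v, (size (sKNN s v) + isSome (sQ s v) <= k)%N.

Hypothesis k_gt0 : (0 < k)%N.

Lemma reach_invariant :
  forall s c, reach E w L k s c ->
  kNN_bounded s /\ (c <= init_cost L + potential s)%N.
Proof.
move=> s0 c0; elim=> [|s c c' s' _ [bounded_s cost_s]
                        /step_spec[v0 [Qv0 size_s' Q_s' cost_step]]].
  split=> [v|]; last by rewrite /potential big1 ?addn0.
  by rewrite /=; case: (v \in L).
split; last by rewrite (potential_step size_s'); lia.
(* v0 was in Q, so kNN[v0] had room for the new entry. *)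
move=> v; have := bounded_s v0; rewrite Qv0.
case: (sQ s' v) (Q_s' v) => [d /(_ isT)|_]; have := bounded_s v;
  rewrite /= size_s'; case: eqP => [->|_]; rewrite ?eqxx /=; case: (sQ s v) => //=; lia.
Qed.

Lemma potential_le s :
  kNN_bounded s -> (potential s <= k * \sum_v step_charge v)%N.
Proof.
move=> bounded_s; rewrite /potential big_distrr /=.
by apply: leq_sum => v _; rewrite leq_mul2r (leq_trans (leq_addr _ _) (bounded_s v)) orbT.
Qed.

End Execution.

Lemma sum_step_charge (V : finType) (E : {set {set V}}) :
  \sum_v step_charge E v =
  (#|V| * (2 * pop_cost #|V| + 3) + 3 * \sum_v degree E v)%N.
Proof. by rewrite big_split sum_nat_const -big_distrr /= mulnC. Qed.

Theorem theoremB3 :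
  exists C : nat,
    forall (R : realDomainType) (V : finType) (E : {set {set V}})
           (w : {set V} -> R) (L : {set V}) (k : nat),
      (forall e, e \in E -> #|e| = 2) ->
      (forall e, e \in E -> (0 <= w e)%R) ->
      (1 <= k)%N ->
      forall (s : state R V) (c : nat),
        reach E w L k s c ->
        (c <= C * (k * #|E| + k * #|V| * (trunc_log 2 #|V|).+1))%N.
Proof.
(* The weights only affect priorities, never the cost. *)
exists 8 => R V E w L k card_edge _ k_gt0 s c /(reach_invariant k_gt0)[bounded_s cost_s].
have := potential_le E bounded_s; rewrite sum_step_charge.
set P := pop_cost #|V|; set D := (\sum_v degree E v)%N.
have kD_le : (k * D <= k * (2 * #|E|))%N.
  by rewrite leq_mul2l sum_degree_le_two_edges ?orbT.
have kV_le : (k * #|V| <= k * #|V| * P)%N by rewrite leq_pmulr.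
have V_le : (#|V| <= k * #|V|)%N by rewrite leq_pmull.
rewrite -/(pop_cost #|V|) -/P /init_cost in cost_s *.
have := max_card L; lia.
Qed.
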